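(* For every $N\in\omega$ there are sets $F_1,\dots,F_{2^N}\in\mathcal{S}$ such that the vector $x=\sum_{j=1}^{2^N}\chi_{F_j}$ satisfies: (1) $x(i)\in\{2^r: r=0,\dots,N\}$ for every $i\in\mathrm{supp}(x)$; (2) $\phi(A_r)\ge 2^{N-r}$ for every $r=0,\dots,N$, where $A_r=\{i\in\omega: x(i)=2^r\}$.
   Context: $\omega=\{1,2,3,\dots\}$. The Schreier family is $\mathcal{S}=\{A\subseteq\omega: |A|\le\min(A)\}$ (including $\emptyset$). For finite $A,B\subseteq\omega$, $A<B$ means $\max A<\min B$. For a finite $A\subseteq\omega$, $\phi(A)$ is the minimal number $m$ such that $A=B_1\cup\dots\cup B_m$ with $B_1<B_2<\dots<B_m$ and each $B_i\in\mathcal{S}$ (the minimal number of consecutive Schreier sets covering $A$). $\chi_F$ is the characteristic function of $F$ and $\mathrm{supp}(x)=\{i:x(i)\neq0\}$. *)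

From mathcomp Require Import all_boot.
From mathcomp Require Import boolp.
Set Implicit Arguments. Unset Strict Implicit. Unset Printing Implicit Defensive.

(* Finite subsets of omega = {1,2,...} are represented by duplicate-free
   lists of natural numbers. *)

Definition schreier (A : seq nat) : Prop :=
  [/\ uniq A, all (fun a => 0 < a) A & forall a, a \in A -> size A <= a].

Definition successive (Bs : seq (seq nat)) : Prop :=
  forall k l, k < l < size Bs ->
    forall a b, a \in nth [::] Bs k -> b \in nth [::] Bs l -> a < b.

Definition schreier_decomp (A : nat -> Prop) (Bs : seq (seq nat)) : Prop :=
  [/\ forall B, B \in Bs -> schreier B,
      successive Bs &
      forall i, A i <-> has (fun B => i \in B) Bs].

Definition decomposable (A : nat -> Prop) (m : nat) : Prop :=
  exists Bs, schreier_decomp A Bs /\ size Bs = m.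

(* phi(A): the minimal number of successive Schreier sets covering A
   (0 by convention if no such decomposition exists, which never happens
   for finite A ⊆ ω). *)
Definition phi (A : nat -> Prop) : nat :=
  match pselect (exists m, `[< decomposable A m >]) with
  | left h => ex_minn h
  | right _ => 0
  end.

From mathcomp Require Import all_boot.
From mathcomp Require Import boolp.
From mathcomp Require Import zify.

Set Implicit Arguments.
Unset Strict Implicit.
Unset Printing Implicit Defensive.

(* Lower bound: call [ds = d_1 < ... < d_k] a gap chain of a set [A] if each
   [d_(j+1)] is preceded by at least [d_j] points of [A] in (d_j, d_(j+1)].  A
   Schreier set containing [d_j] has at most [d_j] elements, so it cannot reach
   [d_(j+1)]; hence every decomposition of [A] into successive Schreier sets
   has at least [k] blocks.

   Construction: a family of height [n] above [a] consists of two families of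
   height [n - 1], placed one after the other, with every set extended by a
   common tail of [a + 1] consecutive integers lying above both.  The tail has
   multiplicity [2 ^ n] and is itself a gap chain of length one, while the gap
   chains of level [r < n] of the two halves concatenate into one twice as
   long.  The halves are built with [a + 1] extra slack ([size F + s <= min F])
   so that the sets stay Schreier after the tail is appended. *)

Lemma phi_ge (A : nat -> Prop) (n : nat) :
  (exists m, decomposable A m) ->
  (forall Bs, schreier_decomp A Bs -> n <= size Bs) -> n <= phi A.
Proof.
move=> [m decA] lbA; rewrite /phi; case: pselect => [exA|]; last first.
  by case; exists m; apply/asboolP.
by case: ex_minnP => k /asboolP [Bs [decBs <-]] _; apply: lbA.
Qed.

Lemma decomposable_bounded (A : nat -> Prop) (b : nat) :
  (forall i, A i -> 0 < i <= b) -> exists m, decomposable A m.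
Proof.
move=> boundA; pose s := [seq i <- iota 1 b | `[< A i >]].
have sorted_s : sorted ltn s.
  by apply: sorted_filter; [exact: ltn_trans | exact: iota_ltn_sorted].
exists (size s), [seq [:: i] | i <- s]; rewrite size_map; split=> //; split.
- move=> B /mapP [i]; rewrite mem_filter mem_iota => /andP [_ /andP [i_gt0 _]] ->.
  by split=> //= [|a]; rewrite ?andbT // inE => /eqP ->.
- move=> k l /andP [lt_kl lt_ls] a c; rewrite size_map in lt_ls.
  rewrite !(nth_map 0) ?(ltn_trans lt_kl) // !inE => /eqP -> /eqP ->.
  by apply: (sorted_ltn_nth ltn_trans) => //; rewrite inE (ltn_trans lt_kl).
- move=> i; split=> [Ai | /hasP [_ /mapP [j + ->]]]; last first.
    by rewrite mem_filter inE => /andP [/asboolP Aj _] /eqP ->.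
  apply/hasP; exists [:: i]; rewrite ?inE //; apply: map_f.
  by rewrite mem_filter mem_iota asboolT //=; have := boundA i Ai; lia.
Qed.

Definition block_index (Bs : seq (seq nat)) (i : nat) : nat :=
  find (fun B => i \in B) Bs.

Definition schreier_gap (p : pred nat) (lo d : nat) : bool :=
  lo <= count (fun i => (lo < i) && p i) (iota 0 d.+1).

Definition gap_chain (p : pred nat) (lo : nat) (ds : seq nat) : bool :=
  path (schreier_gap p) lo ds && all p ds.

Section BlockIndex.

Variables (A : nat -> Prop) (Bs : seq (seq nat)).
Hypothesis decompBs : schreier_decomp A Bs.

Lemma block_index_lt i : A i -> block_index Bs i < size Bs.
Proof. by case: decompBs => _ _ /(_ i) coverA /coverA; rewrite has_find. Qed.

Lemma mem_block_index i : A i -> i \in nth [::] Bs (block_index Bs i).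
Proof.
by case: decompBs => _ _ /(_ i) coverA /coverA; apply: nth_find.
Qed.

Lemma schreier_block i : A i -> schreier (nth [::] Bs (block_index Bs i)).
Proof.
case: decompBs => schreierBs _ _ /block_index_lt lt_iBs.
exact/schreierBs/mem_nth.
Qed.

Lemma block_index_mono i j : A i -> A j -> i <= j ->
  block_index Bs i <= block_index Bs j.
Proof.
move=> Ai Aj le_ij; rewrite leqNgt; apply/negP => lt_ji.
case: decompBs => _ succBs _.
have := succBs _ _ _ _ _ (mem_block_index Aj) (mem_block_index Ai).
by rewrite lt_ji block_index_lt // => /(_ isT); lia.
Qed.

Lemma block_index_gap (p : pred nat) lo d : (forall i, p i -> A i) ->
  p lo -> p d -> schreier_gap p lo d -> block_index Bs lo < block_index Bs d.
Proof.
move=> pA plo pd gap_lo_d; rewrite ltnNge; apply/negP => le_dlo.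
pose S := [seq i <- iota 0 d.+1 | (lo < i) && p i].
have memS i : i \in S -> [/\ lo < i, i <= d & p i].
  by rewrite mem_filter mem_iota => /and3P [? ? ?]; split=> //; lia.
have same_block j : j \in S -> block_index Bs j = block_index Bs lo.
  move=> /memS [lt_lo_j le_jd pj]; apply/eqP; rewrite eqn_leq.
  rewrite (leq_trans (block_index_mono (pA _ pj) (pA _ pd) le_jd) le_dlo).
  by rewrite (block_index_mono (pA _ plo) (pA _ pj)) // ltnW.
have sub : {subset lo :: S <= nth [::] Bs (block_index Bs lo)}.
  move=> j; rewrite inE => /orP [/eqP -> | jS]; first exact/mem_block_index/pA.
  by rewrite -(same_block j jS); apply/mem_block_index/pA; case: (memS j jS).
have uniq_loS : uniq (lo :: S).
  rewrite /= filter_uniq ?iota_uniq // andbT; apply/negP => /memS [].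
  by rewrite ltnn.
have [_ _ small] := schreier_block (pA _ plo).
have := uniq_leq_size uniq_loS sub; have := small lo (mem_block_index (pA _ plo)).
by rewrite /= size_filter; move: gap_lo_d; rewrite /schreier_gap; lia.
Qed.

Lemma gap_chain_size_le (p : pred nat) lo ds : (forall i, p i -> A i) ->
  gap_chain p lo ds -> size ds <= size Bs.
Proof.
move=> pA /andP [/path_sorted sorted_ds all_p].
have sorted_idx : sorted ltn [seq block_index Bs i | i <- ds].
  rewrite sorted_map; apply: sub_in_sorted all_p sorted_ds => i j /= pi pj.
  exact: block_index_gap.
rewrite -(size_map (block_index Bs)) -(size_iota 0 (size Bs)).
apply: uniq_leq_size; first exact: sorted_uniq ltn_trans ltnn _ sorted_idx.
move=> _ /mapP [i /(allP all_p) pi ->]; rewrite mem_iota /=.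
exact/block_index_lt/pA.
Qed.

End BlockIndex.

Lemma phi_ge_gap_chain (A : nat -> Prop) (p : pred nat) lo ds b :
  (forall i, A i -> 0 < i <= b) -> (forall i, p i -> A i) ->
  gap_chain p lo ds -> size ds <= phi A.
Proof.
move=> boundA pA chain_ds; apply: phi_ge.
  exact: decomposable_bounded boundA.
by move=> Bs decBs; exact: (gap_chain_size_le decBs pA chain_ds).
Qed.

Definition mult (L : seq (seq nat)) (i : nat) : nat := \sum_(F <- L) (i \in F).

Definition level (L : seq (seq nat)) (r : nat) : pred nat :=
  fun i => mult L i == 2 ^ r.

Lemma mult_cat (L1 L2 : seq (seq nat)) i :
  mult (L1 ++ L2) i = mult L1 i + mult L2 i.
Proof. exact: big_cat. Qed.

Lemma mult_eq0 (L : seq (seq nat)) i :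
  (forall F, F \in L -> i \notin F) -> mult L i = 0.
Proof.
by move=> notin; rewrite /mult big1_seq // => F /andP [_ /notin /negbTE ->].
Qed.

Lemma mult_neq0 (L : seq (seq nat)) i :
  mult L i != 0 -> exists2 F, F \in L & i \in F.
Proof.
case: (boolP (has (fun F => i \in F) L)) => [/hasP [F] | /hasPn notin].
  by exists F.
by rewrite mult_eq0.
Qed.

Lemma mult_map_cat (L : seq (seq nat)) (T : seq nat) i :
  (forall F, F \in L -> i \in T -> i \notin F) ->
  mult [seq F ++ T | F <- L] i = if i \in T then size L else mult L i.
Proof.
move=> disjoint; rewrite /mult big_map; case: ifP => iT.
  by rewrite -sum1_size; apply: eq_big_seq => F FL; rewrite mem_cat iT orbT.
by apply: eq_bigr => F _; rewrite mem_cat iT orbF.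
Qed.

Lemma schreier_gap_mono (p p' : pred nat) lo lo' d :
  subpred p p' -> lo' <= lo -> schreier_gap p lo d -> schreier_gap p' lo' d.
Proof.
rewrite /schreier_gap => sub_pp' le_lo gap_lo_d.
rewrite (leq_trans le_lo) // (leq_trans gap_lo_d) //.
apply: sub_count => i /andP [lt_lo_i pi]; rewrite sub_pp' // andbT.
exact: leq_ltn_trans le_lo lt_lo_i.
Qed.

Lemma gap_chain_mono (p p' : pred nat) lo lo' ds :
  subpred p p' -> lo' <= lo -> gap_chain p lo ds -> gap_chain p' lo' ds.
Proof.
move=> sub_pp' le_lo /andP [path_ds all_p].
rewrite /gap_chain (sub_all sub_pp') // andbT.
case: ds path_ds {all_p} => //= d ds /andP [gap_d path_ds].
rewrite (schreier_gap_mono sub_pp' le_lo) //=.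
by apply: sub_path path_ds => u v; apply: schreier_gap_mono.
Qed.

Lemma gap_chain_cat (p : pred nat) lo lo' ds1 ds2 : last lo ds1 <= lo' ->
  gap_chain p lo ds1 -> gap_chain p lo' ds2 -> gap_chain p lo (ds1 ++ ds2).
Proof.
move=> le_last /andP [path1 all1] chain2.
have /andP [path2 all2] := gap_chain_mono (fun i (pi : p i) => pi) le_last chain2.
by rewrite /gap_chain cat_path all_cat path1 path2 all1.
Qed.

Record family (n m a s b : nat) (L : seq (seq nat)) : Prop := {
  family_size : size L = 2 ^ n;
  family_uniq : forall F, F \in L -> uniq F;
  family_slack : forall F, F \in L -> size F + s <= b.+1;
  family_elt : forall F y, F \in L -> y \in F -> a < y <= b /\ size F + s <= y;
  family_le : a <= b;
  family_mult : forall i, mult L i != 0 -> exists2 r, r < m & mult L i = 2 ^ r;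
  family_chain : forall r, r < m ->
    exists2 ds, size ds = 2 ^ (n - r) & gap_chain (level L r) a ds }.

Lemma family_support n m a s b L i :
  family n m a s b L -> mult L i != 0 -> a < i <= b.
Proof. by move=> famL /mult_neq0 [F FL iF]; case: (family_elt famL FL iF). Qed.

Lemma level_neq0 (L : seq (seq nat)) r i : level L r i -> mult L i != 0.
Proof. by move/eqP ->; rewrite expn_eq0. Qed.

Lemma family_empty a s : family 0 0 a s (a + s) [:: [::]].
Proof.
have nil_only F : F \in [:: [::]] -> F = [::] by rewrite inE => /eqP.
split=> // [F /nil_only -> // | F /nil_only -> | F y /nil_only -> // | | i ].
- by rewrite add0n ltnW // ltnS leq_addl.
- exact: leq_addr.
- by rewrite mult_eq0 // => F /nil_only ->.
Qed.

Section Juxtapose.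

Variables (n m a s b1 b2 : nat) (L1 L2 : seq (seq nat)).
Hypotheses (fam1 : family n m a s b1 L1) (fam2 : family n m b1 s b2 L2).
Hypothesis le_mn : m <= n.+1.

Lemma mult_cat_left i : mult L1 i != 0 -> mult (L1 ++ L2) i = mult L1 i.
Proof.
move=> /(family_support fam1) /andP [_ le_ib1].
rewrite mult_cat [mult L2 i]mult_eq0 ?addn0 // => F FL2; apply/negP => iF.
by have [/andP [lt_b1i _] _] := family_elt fam2 FL2 iF; lia.
Qed.

Lemma mult_cat_right i : mult L2 i != 0 -> mult (L1 ++ L2) i = mult L2 i.
Proof.
move=> /(family_support fam2) /andP [lt_b1i _].
rewrite mult_cat [mult L1 i]mult_eq0 // => F FL1; apply/negP => iF.
by have [/andP [_ le_ib1] _] := family_elt fam1 FL1 iF; lia.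
Qed.

Lemma level_cat_left r : subpred (level L1 r) (level (L1 ++ L2) r).
Proof. by move=> i lvl_i; rewrite /level mult_cat_left ?(level_neq0 lvl_i). Qed.

Lemma level_cat_right r : subpred (level L2 r) (level (L1 ++ L2) r).
Proof. by move=> i lvl_i; rewrite /level mult_cat_right ?(level_neq0 lvl_i). Qed.

Lemma family_cat : family n.+1 m a s b2 (L1 ++ L2).
Proof.
have le_ab1 := family_le fam1; have le_b12 := family_le fam2.
split.
- by rewrite size_cat (family_size fam1) (family_size fam2) expnS mul2n addnn.
- move=> F; rewrite mem_cat => /orP [].
  + exact: (family_uniq fam1).
  + exact: (family_uniq fam2).
- move=> F; rewrite mem_cat.
  by case/orP => [/(family_slack fam1) | /(family_slack fam2)]; lia.
- move=> F y; rewrite mem_cat => /orP [] FL yF.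
  + by have [? ?] := family_elt fam1 FL yF; split=> //; lia.
  + by have [? ?] := family_elt fam2 FL yF; split=> //; lia.
- lia.
- move=> i; case: (eqVneq (mult L1 i) 0) => [mult1_0 | mult1].
    by rewrite mult_cat mult1_0 add0n => /(family_mult fam2).
  by rewrite mult_cat_left // => /(family_mult fam1).
- move=> r lt_rm; have le_rn : r <= n by lia.
  have [ds1 size1 chain1] := family_chain fam1 lt_rm.
  have [ds2 size2 chain2] := family_chain fam2 lt_rm.
  exists (ds1 ++ ds2).
    by rewrite size_cat size1 size2 subSn // expnS mul2n addnn.
  have chain1' := gap_chain_mono (@level_cat_left r) (leqnn a) chain1.
  have chain2' := gap_chain_mono (@level_cat_right r) (leqnn b1) chain2.
  apply: (gap_chain_cat _ chain1' chain2').
  case: (lastP ds1) chain1 => // ds d /andP [_]; rewrite last_rcons all_rcons.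
  by move=> /andP [/level_neq0 /(family_support fam1) /andP []].
Qed.

End Juxtapose.

Definition add_tail (a b : nat) (L : seq (seq nat)) : seq (seq nat) :=
  [seq F ++ iota b.+1 a.+1 | F <- L].

Section AddTail.

Variables (n a s b : nat) (L : seq (seq nat)).
Hypothesis famL : family n n a (s + a.+1) b L.

Let T := iota b.+1 a.+1.

Lemma mem_tail y : (y \in T) = (b < y <= b + a.+1).
Proof. by rewrite mem_iota; lia. Qed.

Lemma mult_add_tail i :
  mult (add_tail a b L) i = if i \in T then 2 ^ n else mult L i.
Proof.
rewrite mult_map_cat => [|F FL]; first by rewrite (family_size famL).
rewrite mem_tail => /andP [lt_bi _].
by apply/negP => iF; have [/andP [_ le_ib] _] := family_elt famL FL iF; lia.
Qed.

Lemma level_add_tail r : r < n -> subpred (level L r) (level (add_tail a b L) r).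
Proof.
move=> lt_rn i lvl_i; rewrite /level mult_add_tail mem_tail.
have /andP [_ le_ib] := family_support famL (level_neq0 lvl_i).
by rewrite ifN //; lia.
Qed.

Lemma gap_chain_tail : gap_chain (level (add_tail a b L) n) a [:: b + a.+1].
Proof.
have le_ab := family_le famL.
pose p := level (add_tail a b L) n.
have p_tail y : y \in T -> p y by move=> yT; rewrite /p /level mult_add_tail yT.
have count_tail : count (fun i => (a < i) && p i) T = a.+1.
  rewrite -[RHS](size_iota b.+1 a.+1); apply/eqP; rewrite -all_count.
  apply/allP => y yT; rewrite p_tail // andbT.
  move: yT; rewrite mem_tail => /andP [lt_by _].
  exact: (leq_ltn_trans le_ab lt_by).
have tail_max : b + a.+1 \in T by rewrite mem_tail leqnn addnS ltnS leq_addr.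
rewrite /gap_chain /= -/p p_tail // !andbT /schreier_gap.
by rewrite -addSn iotaD count_cat add0n -/T count_tail; lia.
Qed.

Lemma family_add_tail : family n n.+1 a s (b + a.+1) (add_tail a b L).
Proof.
have le_ab := family_le famL.
split.
- by rewrite size_map (family_size famL).
- move=> _ /mapP [F FL ->].
  rewrite cat_uniq (family_uniq famL FL) iota_uniq andbT andTb.
  apply/hasPn => y; rewrite mem_tail => /andP [lt_by _]; apply/negP => yF.
  by have [/andP [_ le_yb] _] := family_elt famL FL yF; lia.
- move=> _ /mapP [F FL ->]; rewrite size_cat size_iota.
  by have := family_slack famL FL; lia.
- move=> _ y /mapP [F FL ->].
  rewrite mem_cat size_cat size_iota => /orP [yF | yT].
  + by have [? ?] := family_elt famL FL yF; split; lia.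
  + by move: yT; rewrite mem_tail; have := family_slack famL FL; split; lia.
- lia.
- move=> i; rewrite mult_add_tail; case: ifP => _; first by exists n.
  by move=> /(family_mult famL) [r lt_rn ->]; exists r => //; lia.
- move=> r; rewrite ltnS leq_eqVlt => /orP [/eqP -> | lt_rn].
    by exists [:: b + a.+1]; rewrite ?subnn //; exact: gap_chain_tail.
  have [ds size_ds chain_ds] := family_chain famL lt_rn.
  exists ds => //.
  exact: (gap_chain_mono (level_add_tail lt_rn) (leqnn a) chain_ds).
Qed.

End AddTail.

Fixpoint build (n a s : nat) : seq (seq nat) * nat :=
  let s' := s + a.+1 in
  let core := if n is n'.+1 then
      let p1 := build n' a s' in
      let p2 := build n' p1.2 s' in (p1.1 ++ p2.1, p2.2)
    else ([:: [::]], a + s') in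
  (add_tail a core.2 core.1, core.2 + a.+1).

Lemma build_family n a s : family n n.+1 a s (build n a s).2 (build n a s).1.
Proof.
elim: n a s => [|n IH] a s; apply: family_add_tail; first exact: family_empty.
exact: family_cat (IH _ _) (IH _ _) (leqnn _).
Qed.

Lemma mult_nth (L : seq (seq nat)) i :
  \sum_(j < size L) (i \in nth [::] L j) = mult L i.
Proof. by rewrite /mult (big_nth [::]) big_mkord. Qed.

(* The construction also works for [N = 0]. *)
Theorem mainTheorem13 (N : nat) (hN : 0 < N) :
  exists F : 'I_(2 ^ N) -> seq nat,
    (forall j, schreier (F j)) /\
    let x := fun i : nat => (\sum_(j < 2 ^ N) (i \in F j))%N in
    (forall i, x i != 0 -> exists2 r, r <= N & x i = 2 ^ r) /\
    (forall r, r <= N -> 2 ^ (N - r) <= phi (fun i => 0 < i /\ x i = 2 ^ r)).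
Proof.
have famL := build_family N 0 0.
set L := (build N 0 0).1 in famL; set b := (build N 0 0).2 in famL.
exists (fun j => nth [::] L j); split.
  move=> j; have FL : nth [::] L j \in L by rewrite mem_nth // (family_size famL).
  split; first exact: (family_uniq famL FL).
    by apply/allP => y yF; case: (family_elt famL FL yF) => /andP [].
  by move=> y yF; case: (family_elt famL FL yF); rewrite addn0.
move=> x; have xE i : x i = mult L i by rewrite /x -(family_size famL) mult_nth.
split=> [i | r le_rN]; first by rewrite !xE => /(family_mult famL).
have [ds <- chain_ds] := family_chain famL le_rN.
apply: (phi_ge_gap_chain (b := b) _ _ chain_ds) => i.
  by rewrite xE => -[_ xi]; apply: (family_support famL); rewrite xi expn_eq0.
move=> lvl_i; rewrite xE (eqP lvl_i); split=> //.
by have /andP [] := family_support famL (level_neq0 lvl_i).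
Qed.
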